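(* Let $f,g:\mathbb{R}^n\to\mathbb{R}$ satisfy assumptions (A1)–(A4) below, let $x_0\in\Omega=\{x:g(x)\le 0\}$, and suppose the bounded feasible set $\Omega_{f(x_0)}=\{x: f(x)\le f(x_0),\ g(x)\le 0\}$ is non-empty. Then for $\zeta\in[0,1]$ the vector field $\mathbf{s}_\zeta(x)=-\frac{\nabla f(x)}{|\nabla f(x)|}-\zeta\frac{\nabla g(x)}{|\nabla g(x)|}$ is Lipschitz continuous on $\Omega_{f(x_0)}$, i.e. there is a constant $L>0$ with $|\mathbf{s}_\zeta(x)-\mathbf{s}_\zeta(y)|\le L|x-y|$ for all $x,y\in\Omega_{f(x_0)}$.
   Context: Assumptions: (A1) $\lim_{|x|\to\infty} f(x)=+\infty$; (A2) $\nabla f(x)\neq 0$ for all $x\in\Omega$; (A3) $\nabla g(x)\neq 0$ for all $x\in\Omega$; (A4) $f$ and $g$ are twice continuously differentiable. $|\cdot|$ denotes the Euclidean norm. *)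

From HB Require Import structures.
From mathcomp Require Import all_boot all_order all_algebra.
From mathcomp Require Import all_classical all_reals all_analysis.
Set Implicit Arguments. Unset Strict Implicit. Unset Printing Implicit Defensive.
Import Order.TTheory GRing.Theory Num.Theory.
Import numFieldNormedType.Exports.
Local Open Scope classical_set_scope.
Local Open Scope ring_scope.

Section Defs.
Context {R : realType} {n : nat}.

(* Euclidean norm |v| on R^n (the library's matrix norm is the max norm). *)
Definition enorm (v : 'rV[R]_n) : R := Num.sqrt (\sum_(i < n) v 0 i ^+ 2).

Definition ebasis (i : 'I_n) : 'rV[R]_n := delta_mx 0 i.

Definition partial (f : 'rV[R]_n -> R) (i : 'I_n) (x : 'rV[R]_n) : R :=
  'D_(ebasis i) f x.

Definition gradient (f : 'rV[R]_n -> R) (x : 'rV[R]_n) : 'rV[R]_n :=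
  \row_i partial f i x.

Definition C2 (f : 'rV[R]_n -> R) : Prop :=
  [/\ continuous f,
      (forall i x, derivable f x (ebasis i)),
      (forall i, continuous (partial f i)),
      (forall i j x, derivable (partial f i) x (ebasis j)) &
      (forall i j, continuous (partial (partial f i) j))].

Definition coercive (f : 'rV[R]_n -> R) : Prop :=
  forall M : R, exists r : R, forall x, r < enorm x -> M < f x.

Definition s_field (f g : 'rV[R]_n -> R) (zeta : R) (x : 'rV[R]_n) : 'rV[R]_n :=
  - ((enorm (gradient f x))^-1 *: gradient f x)
  - zeta *: ((enorm (gradient g x))^-1 *: gradient g x).

End Defs.

From HB Require Import structures.
From mathcomp Require Import all_boot all_order all_algebra.
From mathcomp Require Import all_classical all_reals all_analysis.
From mathcomp Require Import ring lra.
Import Order.TTheory GRing.Theory Num.Theory.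
Import numFieldNormedType.Exports.
Local Open Scope classical_set_scope.
Local Open Scope ring_scope.

Set Implicit Arguments.
Unset Strict Implicit.
Unset Printing Implicit Defensive.

(* The feasible set is closed and, f being coercive, lies in a cube, so it is
   compact.  The second partial derivatives of f and g are continuous, hence
   bounded on the cube, so by the mean value theorem along coordinate paths the
   gradients are Lipschitz there.  The nonvanishing continuous functions
   |grad f| and |grad g| are bounded below by some a > 0 on the compact
   feasible set, and v |-> v / |v| is (2/a)-Lipschitz on {|v| >= a}. *)

Section EuclideanNorm.
Context {R : realType}.

Lemma cauchy_schwarz (I : finType) (a b : I -> R) :
  (\sum_i a i * b i) ^+ 2 <= (\sum_i a i ^+ 2) * (\sum_i b i ^+ 2).
Proof.
set A := \sum_i a i ^+ 2; set B := \sum_i b i ^+ 2; set C := \sum_i a i * b i.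
(* Lagrange's identity *)
have row i : \sum_j (a i * b j - a j * b i) ^+ 2 =
    a i ^+ 2 * B + b i ^+ 2 * A - (a i * b i * C) *+ 2.
  by rewrite !mulr_sumr -sumrMnl -big_split /= -sumrB; apply: eq_bigr => j _; ring.
have : 0 <= \sum_i \sum_j (a i * b j - a j * b i) ^+ 2.
  by do 2 (apply: sumr_ge0 => ? _); exact: sqr_ge0.
rewrite (eq_bigr _ (fun i _ => row i)) sumrB big_split /= sumrMnl -!mulr_suml.
by rewrite -/A -/B -/C expr2 mulr2n => ?; lra.
Qed.

Lemma ler_sum_term (I : finType) (F : I -> R) i :
  (forall j, 0 <= F j) -> F i <= \sum_j F j.
Proof. by move=> F_ge0; rewrite (bigD1 i) //= lerDl sumr_ge0. Qed.

Context {n : nat}.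
Implicit Types u v : 'rV[R]_n.

Lemma enorm_ge0 v : 0 <= enorm v.
Proof. exact: sqrtr_ge0. Qed.

Lemma enorm_sqr v : enorm v ^+ 2 = \sum_i v 0 i ^+ 2.
Proof. by rewrite sqr_sqrtr // sumr_ge0 // => i _; exact: sqr_ge0. Qed.

Lemma enorm_gt0 v : v != 0 -> 0 < enorm v.
Proof.
move=> v0; rewrite lt_def enorm_ge0 andbT; apply: contra v0 => /eqP v_eq0.
have /psumr_eq0P sqr_eq0 : \sum_i v 0 i ^+ 2 = 0 by rewrite -enorm_sqr v_eq0 expr0n.
apply/eqP/rowP => i; rewrite mxE; apply/eqP.
by rewrite -sqrf_eq0 sqr_eq0 // => j _; exact: sqr_ge0.
Qed.

Lemma enormZ (c : R) v : enorm (c *: v) = `|c| * enorm v.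
Proof.
rewrite /enorm -sqrtr_sqr -sqrtrM ?sqr_ge0 // mulr_sumr; congr Num.sqrt.
by apply: eq_bigr => i _; rewrite mxE exprMn.
Qed.

Lemma enormN v : enorm (- v) = enorm v.
Proof. by rewrite -scaleN1r enormZ normrN normr1 mul1r. Qed.

Lemma enorm_coord v i : `|v 0 i| <= enorm v.
Proof.
rewrite -(ler_pXn2r (n := 2)) ?nnegrE ?enorm_ge0 // enorm_sqr real_normK ?num_real //.
by rewrite (bigD1 i) //= lerDl sumr_ge0 // => j _; exact: sqr_ge0.
Qed.

Lemma enorm_le_sum_norm v : enorm v <= \sum_i `|v 0 i|.
Proof.
rewrite -(ler_pXn2r (n := 2)) ?nnegrE ?enorm_ge0 ?sumr_ge0 // enorm_sqr.
rewrite expr2 mulr_suml; apply: ler_sum => i _.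
rewrite mulr_sumr (bigD1 i) //= -normrM -expr2 normrX real_normK ?num_real //.
by rewrite lerDl sumr_ge0 // => j _; exact: mulr_ge0.
Qed.

Lemma sum_norm_le_enorm v : \sum_i `|v 0 i| <= n%:R * enorm v.
Proof.
apply: le_trans (_ : \sum_(i < n) enorm v <= _).
  by apply: ler_sum => i _; exact: enorm_coord.
by rewrite sumr_const card_ord mulr_natl.
Qed.

Lemma enormD u v : enorm (u + v) <= enorm u + enorm v.
Proof.
rewrite -(ler_pXn2r (n := 2)) ?nnegrE ?addr_ge0 ?enorm_ge0 // sqrrD !enorm_sqr.
have -> : \sum_i (u + v) 0 i ^+ 2 =
    \sum_i u 0 i ^+ 2 + (\sum_i u 0 i * v 0 i) *+ 2 + \sum_i v 0 i ^+ 2.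
  by rewrite -sumrMnl -!big_split /=; apply: eq_bigr => i _; rewrite mxE; ring.
rewrite -!enorm_sqr lerD2r lerD2l lerMn2r /=.
apply: le_trans (ler_norm _) _.
rewrite -(ler_pXn2r (n := 2)) ?nnegrE ?mulr_ge0 ?enorm_ge0 //.
by rewrite real_normK ?num_real // exprMn !enorm_sqr; exact: cauchy_schwarz.
Qed.

Lemma enorm_distC u v : enorm (u - v) = enorm (v - u).
Proof. by rewrite -enormN opprB. Qed.

Lemma ler_enorm_dist u v : `|enorm u - enorm v| <= enorm (u - v).
Proof.
have := enormD (u - v) v; have := enormD (v - u) u.
rewrite !subrK enorm_distC ler_norml => vu uv.
by apply/andP; split; lra.
Qed.

Definition normalize v : 'rV[R]_n := (enorm v)^-1 *: v.

Lemma normalize_lipschitz (a : R) u v : 0 < a -> a <= enorm u -> a <= enorm v ->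
  enorm (normalize u - normalize v) <= 2 / a * enorm (u - v).
Proof.
move=> a_gt0 au av; rewrite /normalize.
set p := enorm u; set q := enorm v; set d := enorm (u - v).
have p_gt0 : 0 < p by apply: lt_le_trans au.
have q_gt0 : 0 < q by apply: lt_le_trans av.
have qp_le : `|q - p| <= d by rewrite distrC; exact: ler_enorm_dist.
have -> : p^-1 *: u - q^-1 *: v = p^-1 *: (u - v) + (p^-1 - q^-1) *: v.
  by rewrite scalerBr scalerBl addrA subrK.
apply: le_trans (enormD _ _) _; rewrite !enormZ -/d -/q.
have -> : `|p^-1 - q^-1| * q = `|q - p| / p.
  have -> : p^-1 - q^-1 = (q - p) / (p * q) by field; rewrite !gt_eqF.
  rewrite normrM normfV (gtr0_norm (mulr_gt0 p_gt0 q_gt0)).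
  by field; rewrite !gt_eqF.
rewrite gtr0_norm ?invr_gt0 // mulrC -mulrDl.
apply: le_trans (_ : (d + d) / p <= _).
  by rewrite ler_wpM2r ?invr_ge0 ?(ltW p_gt0) // lerD2l.
rewrite (_ : (d + d) / p = 2 / p * d); last by field; rewrite gt_eqF.
by rewrite ler_wpM2r ?enorm_ge0 // ler_wpM2l // lef_pV2 ?posrE.
Qed.

Lemma enorm_combination_sub (z : R) (u1 u2 v1 v2 : 'rV[R]_n) : `|z| <= 1 ->
  enorm ((- u1 - z *: v1) - (- u2 - z *: v2)) <= enorm (u1 - u2) + enorm (v1 - v2).
Proof.
move=> z_le1.
have -> : (- u1 - z *: v1) - (- u2 - z *: v2) = - (u1 - u2) + (- z) *: (v1 - v2).
  by apply/rowP => i; rewrite !mxE; ring.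
apply: le_trans (enormD _ _) _.
by rewrite enormN enormZ normrN lerD2l ler_piMl ?enorm_ge0.
Qed.

End EuclideanNorm.

Lemma s_fieldE (R : realType) n (f g : 'rV[R]_n -> R) zeta x :
  s_field f g zeta x = - normalize (gradient f x) - zeta *: normalize (gradient g x).
Proof. by []. Qed.

Section MeanValue.
Context {R : realType}.

Lemma mean_value_ineq (phi dphi : R -> R) (a b M : R) :
  (forall s : R, is_derive s (1 : R) phi (dphi s)) ->
  (forall s, Num.min a b <= s <= Num.max a b -> `|dphi s| <= M) ->
  `|phi b - phi a| <= M * `|b - a|.
Proof.
move=> dphi_phi; wlog ab : a b / a <= b => [wlog_ab|] dphi_le.
  have [ab|/ltW ba] := leP a b; first exact: wlog_ab.
  rewrite distrC [`|b - a|]distrC; apply: wlog_ab ba _ => s.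
  by rewrite minC maxC; exact: dphi_le.
have phi_cont : {within `[a, b], continuous phi}.
  apply: continuous_subspaceT => x; have [phi_dx _] := dphi_phi x.
  exact/differentiable_continuous/derivable1_diffP.
have [c + ->] := MVT_segment ab (fun x _ => dphi_phi x) phi_cont.
rewrite in_itv /= => cab; rewrite normrM ler_wpM2r //.
by apply: dphi_le; rewrite (min_l ab) (max_r ab).
Qed.

Lemma is_derive_line n (h : 'rV[R]_n -> R) (z e : 'rV[R]_n) (t : R) :
  derivable h (z + t *: e) e ->
  is_derive t (1 : R) (fun s => h (z + s *: e)) ('D_e h (z + t *: e)).
Proof.
move=> dh.
have shiftE : (fun s : R => s^-1 *: (h (z + (s *: 1 + t) *: e) - h (z + t *: e))) =
    (fun s : R => s^-1 *: (h (s *: e + (z + t *: e)) - h (z + t *: e))).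
  by apply/funext => s; rewrite scalerDl [s *: 1]mulr1 addrCA addrC.
by split; rewrite /derivable /derive /= shiftE.
Qed.

End MeanValue.

Section Cube.
Context {R : realType} {n : nat}.

Definition cube (r : R) : set 'rV[R]_n := [set z | forall k, `|z 0 k| <= r].

Lemma compact_cube r : compact (cube r : set 'rV[R]_n).
Proof.
have := rV_compact (fun _ : 'I_n => @segment_compact R (- r) r).
congr compact; apply/funext => z; apply/propext.
by split=> zr k; have := zr k; rewrite /= in_itv /= ler_norml.
Qed.

Variables (x y : 'rV[R]_n).

Definition coord_path (k : nat) : 'rV[R]_n :=
  \row_i (if (i < k)%N then y 0 i else x 0 i).

Lemma coord_path0 : coord_path 0 = x.
Proof. by apply/rowP => i; rewrite mxE. Qed.

Lemma coord_path_end : coord_path n = y.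
Proof. by apply/rowP => i; rewrite mxE ltn_ord. Qed.

Lemma coord_pathS (k : 'I_n) :
  coord_path k.+1 = coord_path k + (y 0 k - x 0 k) *: ebasis k.
Proof.
apply/rowP => i; rewrite !mxE /=.
have [->|ik] := eqVneq i k; first by rewrite ltnS leqnn ltnn mulr1 addrC subrK.
by rewrite mulr0 addr0 ltnS leq_eqVlt val_eqE (negPf ik).
Qed.

Lemma coord_path_cube r k : cube r x -> cube r y -> cube r (coord_path k).
Proof. by move=> xr yr i; rewrite mxE; case: ifP. Qed.

End Cube.

Arguments compact_cube {R n} r.

Section PartialBounds.
Context {R : realType} {n : nat}.
Variables (h : 'rV[R]_n -> R) (r M : R).
Hypothesis h_derivable : forall i x, derivable h x (ebasis i).
Hypothesis partial_le : forall i z, cube r z -> `|partial h i z| <= M.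

Lemma coord_path_step x y (k : 'I_n) : cube r x -> cube r y ->
  `|h (coord_path x y k.+1) - h (coord_path x y k)| <= M * `|y 0 k - x 0 k|.
Proof.
move=> xr yr; set z := coord_path x y k; set d := y 0 k - x 0 k.
have := @mean_value_ineq R (fun s => h (z + s *: ebasis k))
  (fun s => partial h k (z + s *: ebasis k)) 0 d M.
rewrite scale0r addr0 subr0 -coord_pathS; apply=> [s|s sd].
  exact/is_derive_line/h_derivable.
apply: partial_le => j; rewrite !mxE eqxx /=.
have [->|_] := eqVneq j k; last by rewrite mulr0 addr0; case: ifP.
(* the k-th coordinate of z + s e_k lies between x_k and y_k *)
rewrite ltnn mulr1.
move: (xr k) (yr k) sd; rewrite /d !ler_norml => /andP[? ?] /andP[? ?].
by rewrite ge_min le_max => /andP[] /orP[] ? /orP[] ?; apply/andP; split; lra.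
Qed.

Lemma cube_lipschitz_l1 x y : cube r x -> cube r y ->
  `|h y - h x| <= M * \sum_k `|y 0 k - x 0 k|.
Proof.
move=> xr yr.
have -> : h y - h x = \sum_(k < n) (h (coord_path x y k.+1) - h (coord_path x y k)).
  rewrite -(big_mkord xpredT (fun k => h (coord_path x y k.+1) - h (coord_path x y k))).
  by rewrite telescope_sumr // coord_path_end coord_path0.
rewrite mulr_sumr; apply: le_trans (ler_norm_sum _ _ _) _.
by apply: ler_sum => k _; exact: coord_path_step.
Qed.

End PartialBounds.

Section Compactness.
Context {R : realType} {n : nat}.
Implicit Types K : set 'rV[R]_n.

Lemma compact_continuous_ub K (F : 'rV[R]_n -> R) :
  compact K -> continuous F -> exists M, forall z, K z -> F z <= M.
Proof.
move=> cK cF; have [K0|K0] := pselect (K !=set0); last first.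
  by exists 0 => z Kz; case: K0; exists z.
have [c _ Fc] := EVT_max_rV K0 cK (continuous_subspaceT cF).
by exists (F c) => z Kz; apply: Fc; rewrite inE.
Qed.

Lemma compact_continuous_pos_lb K (F : 'rV[R]_n -> R) :
  compact K -> continuous F -> (forall z, K z -> 0 < F z) ->
  exists2 a, 0 < a & forall z, K z -> a <= F z.
Proof.
move=> cK cF F_gt0; have [K0|K0] := pselect (K !=set0); last first.
  by exists 1 => // z Kz; case: K0; exists z.
have [c Kc Fc] := EVT_min_rV K0 cK (continuous_subspaceT cF).
by exists (F c) => [|z Kz]; [apply: F_gt0; rewrite -inE | apply: Fc; rewrite inE].
Qed.

Lemma coercive_sublevel_cube (f : 'rV[R]_n -> R) (c : R) :
  coercive f -> exists r, [set x | f x <= c] `<=` cube r.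
Proof.
move=> /(_ c) [r hr]; exists r => x /= fx k.
apply: le_trans (enorm_coord x k) _; rewrite leNgt.
by apply/negP => /hr; rewrite ltNge fx.
Qed.

Lemma compact_feasible (f g : 'rV[R]_n -> R) (c r : R) :
  [set x | f x <= c] `<=` cube r -> continuous f -> continuous g ->
  compact [set x | f x <= c /\ g x <= 0].
Proof.
move=> fr cf cg.
apply: (subclosed_compact _ (compact_cube r)) => [|x [fx _]]; last exact: fr.
rewrite (_ : [set x | _ /\ _] = f @^-1` [set t | t <= c] `&` g @^-1` [set t | t <= 0]) //.
apply: closedI; apply: preimage_closed; try exact: closed_le.
  by move=> x _; exact: cf.
by move=> x _; exact: cg.
Qed.

End Compactness.

Section GradientBounds.
Context {R : realType} {n : nat}.
Implicit Types h : 'rV[R]_n -> R.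

Lemma gradient_lipschitz_cube h (r M : R) :
  (forall i j x, derivable (partial h i) x (ebasis j)) ->
  (forall i j z, cube r z -> `|partial (partial h i) j z| <= M) ->
  forall x y, cube r x -> cube r y ->
  enorm (gradient h x - gradient h y) <= M * n%:R ^+ 2 * enorm (x - y).
Proof.
move=> dh hM x y xr yr; apply: le_trans (enorm_le_sum_norm _) _.
have -> : M * n%:R ^+ 2 * enorm (x - y) = \sum_(i < n) M * (n%:R * enorm (x - y)).
  by rewrite sumr_const card_ord -mulr_natl; ring.
apply: ler_sum => i _; rewrite !mxE.
have M_ge0 : 0 <= M := le_trans (normr_ge0 _) (hM i i x xr).
apply: le_trans (cube_lipschitz_l1 (dh i) (hM i) yr xr) _.
rewrite ler_wpM2l //; apply: le_trans (sum_norm_le_enorm (x - y)).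
by apply: ler_sum => k _; rewrite !mxE.
Qed.

Lemma continuous_sum (T : topologicalType) m (F : 'I_m -> T -> R) :
  (forall i, continuous (F i)) -> continuous (fun x => \sum_(i < m) F i x).
Proof. by move=> cF; apply: continuous_big => //; exact: add_continuous. Qed.

Lemma continuous_enorm_gradient h :
  (forall i, continuous (partial h i)) -> continuous (fun x => enorm (gradient h x)).
Proof.
move=> ch; have -> : (fun x => enorm (gradient h x)) =
    (fun x => Num.sqrt (\sum_i partial h i x * partial h i x)).
  by apply/funext => x; congr Num.sqrt; apply: eq_bigr => i _; rewrite mxE expr2.
have sum_cont : continuous (fun x => \sum_i partial h i x * partial h i x).
  by apply: continuous_sum => i x; apply: continuousM; exact: ch.
by move=> x; apply: (continuous_comp (sum_cont x)); exact: sqrt_continuous.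
Qed.

Lemma C2_gradient_lipschitz_cube h (r : R) : C2 h ->
  exists2 C, 0 <= C & forall x y, cube r x -> cube r y ->
    enorm (gradient h x - gradient h y) <= C * enorm (x - y).
Proof.
case=> _ _ _ dh ch.
pose hessian_sum (z : 'rV[R]_n) : R := \sum_i \sum_j `|partial (partial h i) j z|.
have hessian_cont : continuous hessian_sum.
  apply: continuous_sum => i; apply: continuous_sum => j z.
  by apply: (continuous_comp (ch i j z)); exact: norm_continuous.
have [M hM] := compact_continuous_ub (compact_cube r) hessian_cont.
exists (`|M| * n%:R ^+ 2) => [|x y xr yr]; first by rewrite mulr_ge0.
apply: gradient_lipschitz_cube dh _ x y xr yr => i j z zr.
apply: le_trans _ (ler_norm M); apply: le_trans _ (hM z zr).
have sum_ge0 k : 0 <= \sum_l `|partial (partial h k) l z| by rewrite sumr_ge0.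
rewrite /hessian_sum; apply: le_trans _ (ler_sum_term i sum_ge0).
exact: ler_sum_term j (fun l => normr_ge0 (partial (partial h i) l z)).
Qed.

Lemma normalized_gradient_lipschitz h (K : set 'rV[R]_n) (r : R) :
  C2 h -> compact K -> K `<=` cube r -> (forall x, K x -> gradient h x != 0) ->
  exists2 L, 0 <= L & forall x y, K x -> K y ->
    enorm (normalize (gradient h x) - normalize (gradient h y)) <= L * enorm (x - y).
Proof.
move=> h_C2 cK Kr grad_neq0.
have [C C_ge0 hC] := C2_gradient_lipschitz_cube r h_C2.
have [a a_gt0 ha] : exists2 a, 0 < a & forall x, K x -> a <= enorm (gradient h x).
  have [_ _ ch _ _] := h_C2.
  apply: compact_continuous_pos_lb cK (continuous_enorm_gradient ch) _ => x Kx.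
  exact/enorm_gt0/grad_neq0.
exists (2 / a * C) => [|x y Kx Ky]; first by rewrite mulr_ge0 ?divr_ge0 ?(ltW a_gt0).
apply: le_trans (normalize_lipschitz a_gt0 (ha x Kx) (ha y Ky)) _.
by rewrite -[2 / a * C * _]mulrA ler_wpM2l ?divr_ge0 ?(ltW a_gt0) // hC //; exact: Kr.
Qed.
End GradientBounds.

Unset Implicit Arguments.

Theorem lemma5p4 (R : realType) (n : nat) (f g : 'rV[R]_n -> R)
  (A1 : coercive f)
  (A2 : forall x, g x <= 0 -> gradient f x != 0)
  (A3 : forall x, g x <= 0 -> gradient g x != 0)
  (A4f : C2 f) (A4g : C2 g)
  (x0 : 'rV[R]_n) (hx0 : g x0 <= 0)
  (hne : exists x, f x <= f x0 /\ g x <= 0)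
  (zeta : R) (hzeta : 0 <= zeta <= 1) :
  exists L : R, 0 < L /\
    forall x y, f x <= f x0 -> g x <= 0 -> f y <= f x0 -> g y <= 0 ->
      enorm (s_field f g zeta x - s_field f g zeta y) <= L * enorm (x - y).
Proof.
pose K := [set x | f x <= f x0 /\ g x <= 0].
have [r fr] := coercive_sublevel_cube (f x0) A1.
have Kr : K `<=` cube r by move=> x [fx _]; exact: fr.
have cK : compact K.
  by case: A4f A4g => cf _ _ _ _ [cg _ _ _ _]; exact: compact_feasible fr cf cg.
have [Lf Lf_ge0 hLf] := normalized_gradient_lipschitz A4f cK Kr (fun x Kx => A2 x Kx.2).
have [Lg Lg_ge0 hLg] := normalized_gradient_lipschitz A4g cK Kr (fun x Kx => A3 x Kx.2).
exists (Lf + Lg + 1); split=> [|x y fx gx fy gy]; first by rewrite ltr_wpDl ?addr_ge0.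
have zeta_le1 : `|zeta| <= 1 by case/andP: hzeta => zeta_ge0 ?; rewrite ger0_norm.
rewrite !s_fieldE; apply: le_trans (enorm_combination_sub _ _ _ _ zeta_le1) _.
rewrite mulrDl mul1r ler_wpDr ?enorm_ge0 // mulrDl.
by apply: lerD; [apply: hLf | apply: hLg]; split.
Qed.
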